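(* Let $E$ be a real Banach space, $K\subset E$ nonempty closed convex, $g\in\mathcal F$ totally convex on $E$ satisfying H1–H2, $Y$ a real Banach space containing a closed, convex, pointed cone $C$ with nonempty interior, $f:E\times E\to Y$ and $T:K\to\mathcal P(K)$. Assume B1–B4. Then $DS(f,T)$ is closed and convex.
   Context: $\mathcal F$: functions $g:E\to\mathbb R$ strictly convex, lower semicontinuous, Gâteaux differentiable (derivative $g'$). $D_g(x,y)=g(x)-g(y)-\langle x-y,g'(y)\rangle$; $v_g(x,t)=\inf\{D_g(y,x):\|y-x\|=t\}$; totally convex: $v_g(x,t)>0$ for all $x$, $t>0$. H1: level sets of $D_g(x,\cdot)$ bounded for all $x$; H2: $\inf_{x\in A}v_g(x,t)>0$ for all $t>0$ and bounded $A$. $\Pi^g_D(x)$ = unique minimizer of $D_g(\cdot,x)$ over nonempty closed convex $D$. $\mathrm{Fix}(T)=\{x\in K:x\in T(x)\}$. $T$ quasi $D_g$-nonexpansive: $S(x):=\Pi^g_{T(x)}(x)$ has $\mathrm{Fix}(S)\ne\emptyset$ and $D_g(p,S(x))\le D_g(p,x)$ for $p\in\mathrm{Fix}(S)$, $x\in K$. Demiclosed: $x^k\rightharpoonup\bar x$, $d(x^k,T(x^k))\to0$ imply $\bar x\in\mathrm{Fix}(T)$. Lower semicontinuous at $\bar x$: $x^k\to\bar x$ in $K$, $\bar y\in T(\bar x)$ imply existence of $y^k\in T(x^k)$ with $y^k\to\bar y$. $y\preceq y'$ iff $y'-y\in C$; $C$-convex: $G(tx+(1-t)y)\preceq tG(x)+(1-t)G(y)$.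 B1: $f(x,x)=0$ for all $x$. B2: $f$ uniformly continuous on bounded subsets of $E\times E$. B3: $f(x,\cdot)$ is $C$-convex for all $x$. B4: $T$ has nonempty closed convex values, is demiclosed, lower semicontinuous at each point of $K$, and quasi $D_g$-nonexpansive. $DS(f,T)=\{x\in K:x\in T(x),\ f(y,x)\in-C\ \forall y\in K\}$. *)

From HB Require Import structures.
From mathcomp Require Import all_boot all_order all_algebra.
From mathcomp Require Import all_classical all_reals all_analysis.
Set Implicit Arguments. Unset Strict Implicit. Unset Printing Implicit Defensive.
Import Order.TTheory GRing.Theory Num.Theory.
Import numFieldNormedType.Exports.
Local Open Scope classical_set_scope.
Local Open Scope ring_scope.

Section Defs.
Context {R : realType}.

Section OnE.
Variable E : normedModType R.

Definition convex_set_E (A : set E) : Prop :=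
  forall x y (t : R), A x -> A y -> 0 <= t <= 1 -> A (t *: x + (1 - t) *: y).

Definition bounded_E (A : set E) : Prop :=
  exists M : R, forall x, A x -> `|x| <= M.

Definition cont_linear_functional (phi : E -> R) : Prop :=
  (forall (a : R) (u v : E), phi (a *: u + v) = a * phi u + phi v)
  /\ continuous phi.

Definition weak_cvg (x : nat -> E) (xbar : E) : Prop :=
  forall phi : E -> R, cont_linear_functional phi ->
    (phi \o x) @ \oo --> phi xbar.

Definition strictly_convex (g : E -> R) : Prop :=
  forall x y (t : R), x != y -> 0 < t < 1 ->
    g (t *: x + (1 - t) *: y) < t * g x + (1 - t) * g y.

Definition gateaux_derivative (g : E -> R) (dg : E -> E -> R) : Prop :=
  forall y, cont_linear_functional (dg y) /\
    forall h, (fun t : R => t^-1 * (g (y + t *: h) - g y)) @ 0^' --> dg y h.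

Definition class_F (g : E -> R) (dg : E -> E -> R) : Prop :=
  strictly_convex g
  /\ lower_semicontinuous (fun x => (g x)%:E)
  /\ gateaux_derivative g dg.

Definition bregman (g : E -> R) (dg : E -> E -> R) (x y : E) : R :=
  g x - g y - dg y (x - y).

(* modulus of total convexity, in the extended reals (inf of empty = +oo) *)
Definition modulus_tc g dg (x : E) (t : R) : \bar R :=
  ereal_inf [set (bregman g dg y x)%:E | y in [set y | `|y - x| = t]].

Definition totally_convex g dg : Prop :=
  forall x (t : R), 0 < t -> (0 < modulus_tc g dg x t)%E.

Definition H1 g dg : Prop :=
  forall x (r : R), bounded_E [set y | bregman g dg x y <= r].

Definition H2 g dg : Prop :=
  forall (t : R) (A : set E), 0 < t -> bounded_E A ->
    (0 < ereal_inf [set modulus_tc g dg x t | x in A])%E.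

Definition is_bregman_proj g dg (D : set E) (x p : E) : Prop :=
  D p /\ forall y, D y -> bregman g dg p x <= bregman g dg y x.

(* distance from a point to a set (extended reals: +oo for the empty set) *)
Definition dist_set (x : E) (A : set E) : \bar R :=
  ereal_inf [set (`|x - y|)%:E | y in A].

Definition Fix (K : set E) (T : E -> set E) : set E :=
  [set x | K x /\ T x x].

Definition FixS g dg (K : set E) (T : E -> set E) : set E :=
  [set p | K p /\ is_bregman_proj g dg (T p) p p].

Definition quasi_Dg_nonexpansive g dg (K : set E) (T : E -> set E) : Prop :=
  (forall x, K x -> exists s, is_bregman_proj g dg (T x) x s)
  /\ (exists p, FixS g dg K T p)
  /\ (forall p x s, FixS g dg K T p -> K x -> is_bregman_proj g dg (T x) x s ->
        bregman g dg p s <= bregman g dg p x).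

Definition demiclosed (K : set E) (T : E -> set E) : Prop :=
  forall (x : nat -> E) (xbar : E), (forall k, K (x k)) -> weak_cvg x xbar ->
    (fun k => dist_set (x k) (T (x k))) @ \oo --> 0%E ->
    Fix K T xbar.

Definition lsc_at (K : set E) (T : E -> set E) (xbar : E) : Prop :=
  forall (x : nat -> E) (ybar : E), (forall k, K (x k)) -> x @ \oo --> xbar ->
    T xbar ybar ->
    exists y : nat -> E, (forall k, T (x k) (y k)) /\ y @ \oo --> ybar.

End OnE.

Section OnY.
Variable Y : normedModType R.

Definition cone_hyp (C : set Y) : Prop :=
  closed C
  /\ convex_set_E C
  /\ (forall (t : R) c, 0 <= t -> C c -> C (t *: c))
  /\ (forall c, C c -> C (- c) -> c = 0)
  /\ (exists c, interior C c).

Definition cone_le (C : set Y) (y y' : Y) : Prop := C (y' - y).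

Definition C_convex (E : normedModType R) (C : set Y) (G : E -> Y) : Prop :=
  forall x y (t : R), 0 <= t <= 1 ->
    cone_le C (G (t *: x + (1 - t) *: y)) (t *: G x + (1 - t) *: G y).

End OnY.

Section Bhyp.
Variables (E Y : normedModType R).

Definition B1 (f : E -> E -> Y) : Prop := forall x, f x x = 0.

Definition B2 (f : E -> E -> Y) : Prop :=
  forall A : set (E * E),
    (exists M : R, forall p, A p -> `|p.1| <= M /\ `|p.2| <= M) ->
    forall eps : R, 0 < eps -> exists2 delta : R, 0 < delta &
      forall p q, A p -> A q -> `|p.1 - q.1| < delta -> `|p.2 - q.2| < delta ->
        `|f p.1 p.2 - f q.1 q.2| < eps.

Definition B3 (C : set Y) (f : E -> E -> Y) : Prop :=
  forall x, C_convex C (f x).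

Definition B4 g dg (K : set E) (T : E -> set E) : Prop :=
  (forall x, K x -> T x !=set0 /\ closed (T x) /\ convex_set_E (T x))
  /\ demiclosed K T
  /\ (forall x, K x -> lsc_at K T x)
  /\ quasi_Dg_nonexpansive g dg K T.

Definition DS (C : set Y) (K : set E) (f : E -> E -> Y) (T : E -> set E) : set E :=
  [set x | K x /\ T x x /\ forall y, K y -> C (- f y x)].

End Bhyp.
End Defs.

(* Fix(T) is closed because demiclosedness applied to a strongly convergent
   sequence of fixed points (whose distances to their images vanish) puts the
   limit in Fix(T); it is convex because for z = t x1 + (1-t) x2 with x1, x2
   fixed and s = S(z), the three-point identity
     D(z,s) = t (D(x1,s) - D(x1,z)) + (1-t) (D(x2,s) - D(x2,z))
   and quasi D_g-nonexpansiveness give D(z,s) <= 0, whence z = s in T(z) by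
   total convexity.  The equilibrium condition C(-f(y,x)) for all y in K is an
   intersection of preimages of the closed cone under the continuous maps
   f(y,.), and is preserved by convex combinations since C is a convex cone and
   f(y,.) is C-convex. *)
From HB Require Import structures.
From mathcomp Require Import all_boot all_order all_algebra.
From mathcomp Require Import all_classical all_reals all_analysis.
From mathcomp Require Import ring lra.
Import Order.TTheory GRing.Theory Num.Theory.
Import numFieldNormedType.Exports.
Local Open Scope classical_set_scope.
Local Open Scope ring_scope.

Set Implicit Arguments.
Unset Strict Implicit.
Unset Printing Implicit Defensive.

Section NormedSpace.
Context {R : realType} {E : normedModType R}.

Lemma clfB (phi : E -> R) u v :
  cont_linear_functional phi -> phi (u - v) = phi u - phi v.
Proof. by case=> lin _; rewrite addrC -scaleN1r lin mulN1r addrC. Qed.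

Lemma clf0 (phi : E -> R) : cont_linear_functional phi -> phi 0 = 0.
Proof. by move=> hphi; rewrite -(subrr (0 : E)) clfB // subrr. Qed.

Lemma clfZD (phi : E -> R) a b u v : cont_linear_functional phi ->
  phi (a *: u + b *: v) = a * phi u + b * phi v.
Proof.
move=> hphi; have [lin _] := hphi.
by rewrite lin -[b *: v]addr0 lin clf0 // addr0.
Qed.

Lemma convex_setI (A B : set E) :
  convex_set_E A -> convex_set_E B -> convex_set_E (A `&` B).
Proof. by move=> cA cB x y t [Ax Bx] [Ay By] t01; split; [exact: cA|exact: cB]. Qed.

Lemma closure_cvg_seq (A : set E) x : closure A x ->
  exists2 u : nat -> E, (forall n, A (u n)) & u @ \oo --> x.
Proof.
move=> Ax.
have /choice [u hu] n : exists v, A v /\ `|x - v| < n.+1%:R^-1.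
  have [v [Av xv]] := Ax _ (nbhsx_ballx x n.+1%:R^-1 ltac:(by [])).
  by exists v; split; rewrite // -ball_normE in xv.
exists u => [n|]; first by case: (hu n).
apply/cvgrPdist_lt => e e0; near=> n.
apply: lt_trans (hu n).2 _.
rewrite invf_plt ?posrE ?ltr0Sn //.
apply: (lt_le_trans (_ : e^-1 < n%:R)); last by rewrite ler_nat.
by near: n; apply: nbhs_infty_gtr.
Unshelve. all: by end_near.
Qed.

Lemma cvg_weak_cvg (u : nat -> E) x : u @ \oo --> x -> weak_cvg u x.
Proof. by move=> ux phi hphi; apply: cvg_comp ux (hphi.2 x). Qed.

Lemma dist_set_eq0 (A : set E) x : A x -> dist_set x A = 0%E.
Proof.
move=> Ax; apply/eqP; rewrite eq_le; apply/andP; split.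
  by apply: ereal_inf_lbound; exists x; rewrite // subrr normr0.
by apply: le_ereal_inf_tmp => _ [y _ <-]; rewrite lee_fin.
Qed.

End NormedSpace.

Section Bregman.
Context {R : realType} {E : normedModType R}.
Variables (g : E -> R) (dg : E -> E -> R).
Hypothesis dg_linear : forall y, cont_linear_functional (dg y).

Lemma bregmanxx x : bregman g dg x x = 0.
Proof. by rewrite /bregman !subrr clf0 // subr0. Qed.

Lemma bregman_gt0 y x : totally_convex g dg -> y != x -> 0 < bregman g dg y x.
Proof.
move=> tc yx; rewrite -lte_fin.
apply: lt_le_trans (tc x `|y - x| _) _; first by rewrite normr_gt0 subr_eq0.
by apply: ereal_inf_lbound; exists y.
Qed.

Lemma bregman_ge0 y x : totally_convex g dg -> 0 <= bregman g dg y x.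
Proof.
move=> tc; have [->|yx] := eqVneq y x; first by rewrite bregmanxx.
exact/ltW/bregman_gt0.
Qed.

Lemma bregman_le0_eq y x : totally_convex g dg -> bregman g dg y x <= 0 -> y = x.
Proof.
move=> tc le0; apply/eqP; apply: contraTT le0 => yx.
by rewrite -ltNge bregman_gt0.
Qed.

Lemma bregman_three_point x1 x2 s t (z := t *: x1 + (1 - t) *: x2) :
  bregman g dg z s = t * (bregman g dg x1 s - bregman g dg x1 z)
                   + (1 - t) * (bregman g dg x2 s - bregman g dg x2 z).
Proof.
rewrite /bregman !(clfB _ _ (dg_linear s)) !(clfB _ _ (dg_linear z)).
rewrite /z !(clfZD _ _ _ _ (dg_linear s)) !(clfZD _ _ _ _ (dg_linear z)).
ring.
Qed.

Section FixedPoints.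
Variables (K : set E) (T : E -> set E).

Lemma Fix_sub_FixS : totally_convex g dg -> Fix K T `<=` FixS g dg K T.
Proof.
move=> tc p [Kp Tpp]; split=> //; split=> // y _.
by rewrite bregmanxx bregman_ge0.
Qed.

Lemma convex_Fix : convex_set_E K -> totally_convex g dg ->
  quasi_Dg_nonexpansive g dg K T -> convex_set_E (Fix K T).
Proof.
move=> cvK tc [proj [_ nonexp]] x1 x2 t Fx1 Fx2 /andP[t0 t1].
set z := t *: x1 + (1 - t) *: x2.
have Kz : K z by apply: cvK => //; [case: Fx1|case: Fx2|rewrite t0 t1].
have [s projs] := proj z Kz.
have le1 := nonexp x1 z s (Fix_sub_FixS tc Fx1) Kz projs.
have le2 := nonexp x2 z s (Fix_sub_FixS tc Fx2) Kz projs.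
have zs : z = s by apply: bregman_le0_eq; rewrite // bregman_three_point; nra.
by split; rewrite // {2}zs; case: projs.
Qed.

Lemma closed_Fix : demiclosed K T -> closed (Fix K T).
Proof.
move=> demi x /closure_cvg_seq [u Fu ux].
apply: (demi u) => [n||]; first by case: (Fu n).
  exact: cvg_weak_cvg.
have -> : (fun n => dist_set (u n) (T (u n))) = fun=> 0%E.
  by apply/funext => n; apply: dist_set_eq0; case: (Fu n).
exact: cvg_cst.
Qed.

End FixedPoints.
End Bregman.

Section Equilibria.
Context {R : realType} {E Y : normedModType R}.
Variables (C : set Y) (K : set E) (f : E -> E -> Y).

Definition equilibria : set E := [set x | forall y, K y -> C (- f y x)].

Hypothesis C_scale : forall (t : R) c, 0 <= t -> C c -> C (t *: c).

Lemma cone_addr : convex_set_E C -> forall a b, C a -> C b -> C (a + b).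
Proof.
move=> cvC a b Ca Cb.
have half : 1 - 2^-1 = 2^-1 :> R by field.
have /(C_scale (ler0n _ 2)) := cvC a b 2^-1 Ca Cb ltac:(rewrite invr_ge0 invf_le1; lra).
by rewrite half -scalerDr scalerA mulfV ?pnatr_eq0 // scale1r.
Qed.

Lemma convex_equilibria : convex_set_E C -> B3 C f -> convex_set_E equilibria.
Proof.
move=> cvC convf x1 x2 t Ex1 Ex2 t01 y Ky; have /andP[t0 t1] := t01.
have Cgap := convf y x1 x2 t t01; rewrite /cone_le in Cgap.
have Cx1 := C_scale t0 (Ex1 y Ky).
have Cx2 := C_scale (ltac:(lra) : 0 <= 1 - t) (Ex2 y Ky).
have := cone_addr cvC Cgap (cone_addr cvC Cx1 Cx2).
by congr C; rewrite !scalerN -opprD addrAC subrr add0r.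
Qed.

Lemma B2_continuous : B2 f -> forall y, continuous (f y).
Proof.
move=> unif y x; apply/cvgrPdist_lt => e e0.
have [|d d0 hd] := unif [set p | p.1 = y /\ `|p.2| <= `|x| + 1] _ e e0.
  exists (`|y| + `|x| + 1) => p [-> px].
  by have := normr_ge0 x; have := normr_ge0 y; split; lra.
have d1_gt0 : 0 < Num.min d 1 by rewrite lt_min d0 ltr01.
apply: filterS (nbhsx_ballx x _ d1_gt0) => z.
rewrite -ball_normE /= lt_min => /andP[xzd xz1].
apply: (hd (y, x) (y, z)); rewrite //= ?subrr ?normr0 //; split => //.
  by rewrite lerDl.
have := ler_normB x (x - z); rewrite subKr; lra.
Qed.

Lemma closed_equilibria : closed C -> B2 f -> closed equilibria.
Proof.
move=> clC unif.
apply: (@closed_bigI _ _ K (fun y => (fun x => - f y x) @^-1` C)) => y _.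
by apply: preimage_closed => // x _; apply/continuousN/B2_continuous.
Qed.

End Equilibria.

Lemma DSE {R : realType} {E Y : normedModType R} (C : set Y) (K : set E) f T :
  DS C K f T = Fix K T `&` equilibria C K f.
Proof.
by apply/seteqP; split=> x /=; [case=> Kx [Txx Ex] | case=> [[Kx Txx] Ex]].
Qed.

Theorem corollary2p18 (R : realType)
  (E : completeNormedModType R) (Y : completeNormedModType R)
  (K : set E) (g : E -> R) (dg : E -> E -> R) (C : set Y)
  (f : E -> E -> Y) (T : E -> set E) :
  K !=set0 -> closed K -> convex_set_E K ->
  class_F g dg -> totally_convex g dg -> H1 g dg -> H2 g dg ->
  cone_hyp C ->
  (forall x, K x -> T x `<=` K) ->
  B1 f -> B2 f -> B3 C f -> B4 g dg K T ->
  closed (DS C K f T) /\ convex_set_E (DS C K f T).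
Proof.
move=> _ _ cvK [_ [_ gateaux]] tc _ _ [clC [cvC [C_scale _]]] _ _ unif convf
  [_ [demi [_ qne]]].
have dg_linear y : cont_linear_functional (dg y) by case: (gateaux y).
rewrite DSE; split.
- exact: closedI (closed_Fix demi) (closed_equilibria clC unif).
- exact: convex_setI (convex_Fix dg_linear cvK tc qne)
                     (convex_equilibria C_scale cvC convf).
Qed.
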